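(* Let $\langle A,f,g\rangle$ be a betweenness algebra and $a,b,c\in A$ with $0\notin\{a,b,c\}$ and $g(a,b)=1$. Then: (1) $|A|=2$ or $a\cdot b=0$; (2) $a$ and $b$ are atoms of $A$; (3) if $g(a,c)=1$, then $b=c$.
   Context: A PS-algebra is $\langle A,f,g\rangle$ where $A$ is a Boolean algebra with at least two elements (operations $+,\cdot,-,0,1$) and $f,g\colon A^2\to A$ satisfy: $f(x,y)=0$ whenever $x=0$ or $y=0$; $f$ is additive in each argument; $g(x,y)=1$ whenever $x=0$ or $y=0$; $g$ is co-additive in each argument ($g(x+x',y)=g(x,y)\cdot g(x',y)$, $g(x,y+y')=g(x,y)\cdot g(x,y')$). A betweenness algebra is a PS-algebra satisfying for all $x,y,z$: (ABT0) $x\leq f(x,x)$; (ABT1$_f$) $f(x,y)\leq f(y,x)$; (ABT1$_g$) $g(x,y)\leq g(y,x)$; (ABT2) $y\cdot f(x,z)\leq f(x\cdot f(x,y),z)$; (ABT3) $f(x,g(x,-y)\cdot y)\leq y$; (wMIA) if $x\neq0$ and $y\neq0$ then $g(x,y)\leq f(x,y)$. *)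

From mathcomp Require Import all_boot all_order.
Set Implicit Arguments. Unset Strict Implicit. Unset Printing Implicit Defensive.
Import Order.TTheory.
Local Open Scope order_scope.

(* A Boolean algebra is a complemented distributive lattice with top and
   bottom (ctbDistrLatticeType): + is `|`, . is `&`, - is ~`, 0 is \bot,
   1 is \top.  "At least two elements" is \bot <> \top. *)

Definition PS_algebra (d : Order.disp_t) (A : ctbDistrLatticeType d)
  (f g : A -> A -> A) : Prop :=
  (\bot : A) <> \top /\
      (forall x y, x = \bot \/ y = \bot -> f x y = \bot) /\
      (forall x x' y, f (x `|` x') y = f x y `|` f x' y) /\
      (forall x y y', f x (y `|` y') = f x y `|` f x y') /\
      (forall x y, x = \bot \/ y = \bot -> g x y = \top) /\
      (forall x x' y, g (x `|` x') y = g x y `&` g x' y) /\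
      (forall x y y', g x (y `|` y') = g x y `&` g x y').

Definition betweenness_algebra (d : Order.disp_t) (A : ctbDistrLatticeType d)
  (f g : A -> A -> A) : Prop :=
  PS_algebra f g /\
      (forall x, x <= f x x) /\
      (forall x y, f x y <= f y x) /\
      (forall x y, g x y <= g y x) /\
      (forall x y z, y `&` f x z <= f (x `&` f x y) z) /\
      (forall x y, f x (g x (~` y) `&` y) <= y) /\
      (forall x y, x <> \bot -> y <> \bot -> g x y <= f x y).

Definition has_two_elements (T : Type) : Prop :=
  exists x y : T, x <> y /\ forall z : T, z = x \/ z = y.

Definition atom (d : Order.disp_t) (A : ctbDistrLatticeType d) (x : A) : Prop :=
  x <> \bot /\ forall y : A, y <= x -> y = \bot \/ y = x.

From mathcomp Require Import all_boot all_order.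
Import Order.Theory.
Local Open Scope order_scope.

(* Co-additivity makes [g x] antitone, so [g x y = 1] propagates to every
   [z <= y]; by wMIA such a nonzero [z] has [f x z = 1], while ABT3 says
   that [f x] maps [-z] below [-z].  Hence no nonzero [z < y] exists, i.e.
   [y] is an atom.  Two atoms meeting nontrivially coincide, and
   [g x y = g x z = 1] forces [y = z] because [y + z] is an atom as well.
   Finally [g a a = 1] gives [-a = 0] through ABT2, so [a = 1] is an atom
   and [A = {0, 1}]. *)

Section AtomFacts.
Context {d : Order.disp_t} {A : ctbDistrLatticeType d}.

Lemma atom_meet_eq {x y : A} : atom x -> atom y -> x `&` y <> \bot -> x = y.
Proof.
move=> [_ atx] [_ aty] xy0.
have [//|xyx] := atx _ (leIl x y).
have [//|xyy] := aty _ (leIr y x).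
exact: etrans (esym xyx) xyy.
Qed.

Lemma has_two_elements_atom_top : atom (\top : A) -> has_two_elements A.
Proof.
move=> [top0 attop]; exists \bot, \top; split; first by move/esym/top0.
by move=> z; apply: attop; apply: lex1.
Qed.

End AtomFacts.

Section BetweennessAlgebra.
Context {d : Order.disp_t} {A : ctbDistrLatticeType d} {f g : A -> A -> A}.
Hypothesis betwA : betweenness_algebra f g.

Lemma f0x (y : A) : f \bot y = \bot.
Proof. by case: betwA => -[_ [f0 _]] _; apply: f0; left. Qed.

Lemma fxU (x y y' : A) : f x (y `|` y') = f x y `|` f x y'.
Proof. by case: betwA => -[_ [_ [_ [fxU _]]]] _. Qed.

Lemma gxU (x y y' : A) : g x (y `|` y') = g x y `&` g x y'.
Proof. by case: betwA => -[_ [_ [_ [_ [_ [_ gxU]]]]]] _. Qed.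

Lemma ABT1_g (x y : A) : g x y <= g y x.
Proof. by case: betwA => _ [_ [_ [ABT1_g _]]]. Qed.

Lemma ABT2 (x y z : A) : y `&` f x z <= f (x `&` f x y) z.
Proof. by case: betwA => _ [_ [_ [_ [ABT2 _]]]]. Qed.

Lemma ABT3 (x y : A) : f x (g x (~` y) `&` y) <= y.
Proof. by case: betwA => _ [_ [_ [_ [_ [ABT3 _]]]]]. Qed.

Lemma wMIA (x y : A) : x <> \bot -> y <> \bot -> g x y <= f x y.
Proof. by case: betwA => _ [_ [_ [_ [_ [_ wMIA]]]]]; apply: wMIA. Qed.

Lemma f_homo_r (x : A) : {homo f x : y z / y <= z}.
Proof. by move=> y z /join_r yz; rewrite -yz fxU leUl. Qed.

Lemma g_top_le {x y z : A} : z <= y -> g x y = \top -> g x z = \top.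
Proof. by move=> /join_r zy gxy; move: (gxU x z y); rewrite zy gxy meetx1. Qed.

Lemma g_topC {x y : A} : g x y = \top -> g y x = \top.
Proof. by move=> gxy; apply/eqP; rewrite -le1x -gxy ABT1_g. Qed.

Lemma f_top_of_g_top {x y : A} :
  x <> \bot -> y <> \bot -> g x y = \top -> f x y = \top.
Proof. by move=> x0 y0 gxy; apply/eqP; rewrite -le1x -gxy wMIA. Qed.

Lemma f_compl_le_compl {x y : A} : g x y = \top -> f x (~` y) <= ~` y.
Proof. by move=> gxy; have := ABT3 x (~` y); rewrite complK gxy meet1x. Qed.

Lemma atom_of_g_top {x y : A} :
  x <> \bot -> y <> \bot -> g x y = \top -> atom y.
Proof.
move=> x0 y0 gxy; split=> // z zy.
have [/eqP|/eqP yz0] := eqVneq (y `&` ~` z) \bot.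
  by rewrite disj_leC complK => yz; right; apply/eqP; rewrite eq_le zy yz.
left; have gyz : g x (y `&` ~` z) = \top by apply: g_top_le gxy; apply: leIl.
have fyz := f_top_of_g_top x0 yz0 gyz.
have : \top <= ~` z.
  rewrite -fyz (le_trans (f_homo_r x _ _ (leIr _ _))) //.
  by apply: f_compl_le_compl; apply: g_top_le gxy.
by rewrite le1x => /eqP /(congr1 Order.compl); rewrite complK compl1.
Qed.

Lemma g_top_diag {x : A} : x <> \bot -> g x x = \top -> x = \top.
Proof.
move=> x0 gxx; have fxx := f_top_of_g_top x0 x0 gxx.
have xfx0 : x `&` f x (~` x) = \bot.
  by apply/eqP; rewrite -lex0 -(meetxC x) leI2 // f_compl_le_compl.
have := ABT2 x (~` x) x; rewrite fxx meetx1 xfx0 f0x lex0 => /eqP.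
by move/(congr1 Order.compl); rewrite complK compl0.
Qed.

Lemma g_top_inj {x y z : A} : x <> \bot -> y <> \bot -> z <> \bot ->
  g x y = \top -> g x z = \top -> y = z.
Proof.
move=> x0 y0 z0 gxy gxz.
have yz0 : y `|` z <> \bot.
  by move=> yz0; apply: y0; apply/eqP; rewrite -lex0 -yz0 leUl.
have gxyz : g x (y `|` z) = \top by rewrite gxU gxy gxz meetx1.
have [_ atyz] := atom_of_g_top x0 yz0 gxyz.
have [//|yyz] := atyz y (leUl _ _).
have [//|zyz] := atyz z (leUr _ _).
exact: etrans yyz (esym zyz).
Qed.

End BetweennessAlgebra.

Theorem theorem29 (d : Order.disp_t) (A : ctbDistrLatticeType d)
  (f g : A -> A -> A) (a b c : A) :
  betweenness_algebra f g ->
  a <> \bot -> b <> \bot -> c <> \bot ->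
  g a b = \top ->
  [/\ has_two_elements A \/ a `&` b = \bot,
      atom a /\ atom b &
      (g a c = \top -> b = c)].
Proof.
move=> betwA a0 b0 c0 gab.
have atom_b := atom_of_g_top betwA a0 b0 gab.
have atom_a := atom_of_g_top betwA b0 a0 (g_topC betwA gab).
split=> //; last exact: (g_top_inj betwA a0 b0 c0 gab).
have [|/eqP ab0] := eqVneq (a `&` b) \bot; first by right.
left; move: gab; rewrite -(atom_meet_eq atom_a atom_b ab0) => gaa.
rewrite (g_top_diag betwA a0 gaa) in atom_a.
exact: has_two_elements_atom_top.
Qed.
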